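(* Let $G$ be a finite simple robust graph, and let $uv \in E(G)$ with $d(u) = 7$ and $d(v) = 6$. If $\{v\}$ is not reducible in $G$ and $u$ subsumes $v$, then $\{u,v\}$ is reducible in $G$.
   Context: $N[x] = N(x)\cup\{x\}$. For distinct vertices $u,v$, $u$ subsumes $v$ if $N[u] \supseteq N[v]$. $G$ is robust if for every $x\in V(G)$, every component of $G[N(x)]$ has at least $5$ vertices. For a set $\mathcal{S}$ of triangles, an $\mathcal{S}$-edge is an edge of a triangle in $\mathcal{S}$. A nonempty set $V_0 \subseteq V(G)$ is reducible if there exist a set $\mathcal{S}$ of pairwise edge-disjoint triangles of $G$ and a set $X \subseteq E(G)$ such that (i) $|X| \leq 2|\mathcal{S}|$; (ii) $G - X$ has no triangle containing a vertex of $V_0$; (iii) $X$ contains every $\mathcal{S}$-edge whose endpoints both lie outside $V_0$. *)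

From mathcomp Require Import all_boot.
Set Implicit Arguments. Unset Strict Implicit. Unset Printing Implicit Defensive.

(* A finite simple graph: vertex type T : finType, adjacency e : rel T,
   assumed symmetric and irreflexive (hypotheses of the theorem). *)
Section Graph.
Variables (T : finType) (e : rel T).

Definition nbhd (x : T) : {set T} := [set y | e x y].
Definition cnbhd (x : T) : {set T} := x |: nbhd x.

Definition deg (x : T) : nat := #|nbhd x|.

Definition subsumes (u v : T) : Prop := u != v /\ cnbhd v \subset cnbhd u.

Definition induced_rel (S : {set T}) : rel T :=
  fun a b => [&& a \in S, b \in S & e a b].

Definition component (S : {set T}) (y : T) : {set T} :=
  [set z in S | connect (induced_rel S) y z].

Definition robust : Prop :=
  forall x y, y \in nbhd x -> 5 <= #|component (nbhd x) y|.

Definition is_edge (f : {set T}) : Prop :=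
  exists a b, e a b /\ f = [set a; b].

Definition is_triangle (t : {set T}) : Prop :=
  #|t| = 3 /\ {in t &, forall a b, a != b -> e a b}.

Definition tri_edge (t f : {set T}) : Prop := f \subset t /\ #|f| = 2.

Definition reducible (V0 : {set T}) : Prop :=
  V0 != set0 /\
  exists (S X : {set {set T}}),
    (forall t, t \in S -> is_triangle t) /\
    (forall t1 t2, t1 \in S -> t2 \in S -> t1 != t2 -> #|t1 :&: t2| <= 1) /\
    (forall f, f \in X -> is_edge f) /\
    #|X| <= 2 * #|S| /\
    (* (ii) G - X has no triangle containing a vertex of V0 *)
    (forall t, is_triangle t -> ~~ [disjoint t & V0] ->
       exists f, tri_edge t f /\ f \in X) /\
    (forall t f, t \in S -> tri_edge t f -> [disjoint f & V0] -> f \in X).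

End Graph.

From mathcomp Require Import all_boot.
Set Implicit Arguments. Unset Strict Implicit. Unset Printing Implicit Defensive.

(* Since u subsumes v and d(u) = d(v) + 1, the set A = N(v) - u of common
   neighbours has five vertices and N(u) = A + v + w for a single extra vertex
   w.  Deleting uv, uw and every edge inside A destroys all triangles through u
   or v, and the edges of triangles contained in {u, v} + A that avoid {u, v}
   lie inside A.  It therefore suffices to find, in the join of the edge uv
   with G[A], at least 1 + |E(G[A])|/2 edge-disjoint triangles; this is checked
   by computation for each of the 1024 graphs on five labelled vertices. *)

Section Neighbourhoods.
Variables (T : finType) (e : rel T).

Lemma in_nbhd x y : (y \in nbhd e x) = e x y.
Proof. by rewrite inE. Qed.

Lemma card_nbhdD1 x y : e x y -> #|nbhd e x :\ y| = (deg e x).-1.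
Proof. by move=> xy; rewrite /deg [#|nbhd e x|](cardsD1 y) in_nbhd xy. Qed.

Variables (u v : T).
Hypotheses (e_sym : symmetric e) (e_irr : irreflexive e) (huv : e u v).
Hypothesis u_subsumes_v : subsumes e u v.

Lemma subsumed_adj x : x \in nbhd e v :\ u -> e u x /\ e v x.
Proof.
rewrite in_setD1 in_nbhd => /andP[xu vx]; split=> //.
by have := subsetP u_subsumes_v.2 x; rewrite !inE vx orbT (negbTE xu); apply.
Qed.

Lemma subsumer_extra_nbhd : deg e u = (deg e v).+1 ->
  exists2 w, e u w & forall x, e u x -> x != v -> x != w -> x \in nbhd e v :\ u.
Proof.
move=> duv; set A := nbhd e v :\ u.
have vu : e v u by rewrite e_sym.
have A_sub : A \subset nbhd e u :\ v.
  apply/subsetP => x xA; have [ux vx] := subsumed_adj xA.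
  by rewrite !inE ux andbT; apply: contraTneq vx => ->; rewrite e_irr.
have deg_v_gt0 : 0 < deg e v by apply/card_gt0P; exists u; rewrite in_nbhd.
have /cards1P[w defw] : #|(nbhd e u :\ v) :\: A| == 1.
  rewrite cardsD (setIidPr A_sub) !card_nbhdD1 // duv.
  by case: (deg e v) deg_v_gt0 => // d _; rewrite subSnn.
have : w \in (nbhd e u :\ v) :\: A by rewrite defw set11.
rewrite !inE => /and3P[_ _ uw]; exists w => // x ux xv xw.
apply: contraR xw => xA; apply/eqP/set1P.
by rewrite -defw in_setD xA in_setD1 xv in_nbhd ux.
Qed.

End Neighbourhoods.

Section Triangles.
Variables (T : finType) (e : rel T).

Lemma tri_edge2 (t : {set T}) a b :
  a \in t -> b \in t -> a != b -> tri_edge t [set a; b].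
Proof.
move=> a_t b_t ab; split; last by rewrite cards2 ab.
by apply/subsetP => x; rewrite !inE => /orP[] /eqP ->.
Qed.

Lemma triangle_adj t x y : is_triangle e t -> x \in t -> y \in t -> x != y -> e x y.
Proof. by case=> _; apply. Qed.

Lemma triangle_opposite t z : is_triangle e t -> z \in t ->
  exists x y, [/\ x \in t, y \in t, x != y, x != z & y != z].
Proof.
case=> t3 _ zt; have /cards2P[x [y [xy txy]]] : #|t :\ z| == 2.
  by move: t3; rewrite (cardsD1 z) zt add1n => -[<-].
have : x \in t :\ z by rewrite txy !inE eqxx.
have : y \in t :\ z by rewrite txy !inE eqxx orbT.
by rewrite !inE => /andP[yz yt] /andP[xz xt]; exists x, y.
Qed.

Definition induced_edges (A : {set T}) : {set {set T}} :=
  [set [set a; b] | a in A, b in A & e a b].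

Variables (u v w : T) (A : {set T}).
Hypotheses (huv : e u v) (huw : e u w).
Hypothesis nbhd_u : forall x, e u x -> x != v -> x != w -> x \in A.
Hypothesis nbhd_v : forall x, e v x -> x != u -> x \in A.

Definition pair_cover : {set {set T}} :=
  [set u; v] |: ([set u; w] |: induced_edges A).

Lemma induced_edge_cover a b :
  a \in A -> b \in A -> e a b -> [set a; b] \in pair_cover.
Proof.
by move=> aA bA ab; rewrite !in_setU1; apply/or3P/Or33/imset2_f; rewrite // inE bA.
Qed.

Lemma pair_cover_edge f : f \in pair_cover -> is_edge e f.
Proof.
rewrite !inE => /or3P[/eqP-> | /eqP-> |]; [by exists u, v | by exists u, w |].
by case/imset2P=> a b aA; rewrite inE => /andP[bA ab] ->; exists a, b.
Qed.

Lemma card_pair_cover : #|pair_cover| <= 2 + #|induced_edges A|.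
Proof. by rewrite !cardsU1 addnA leq_add2r (leq_add (leq_b1 _) (leq_b1 _)). Qed.

Lemma pair_cover_triangle t : is_triangle e t -> (u \in t) || (v \in t) ->
  exists f, tri_edge t f /\ f \in pair_cover.
Proof.
move=> t_tri; have [u_t _ | u_t /= v_t] := boolP (u \in t).
  have [x [y [x_t y_t xy xu yu]]] := triangle_opposite t_tri u_t.
  have hit_u z : z \in t -> z != u -> (z == v) || (z == w) ->
      exists f, tri_edge t f /\ f \in pair_cover.
    move=> z_t zu zvw; exists [set u; z].
    split; first by apply: tri_edge2; rewrite // eq_sym.
    by rewrite !inE; case/orP: zvw => /eqP->; rewrite eqxx ?orbT.
  have [x_vw | /norP[xv xw]] := boolP ((x == v) || (x == w)); first exact: (hit_u x).
  have [y_vw | /norP[yv yw]] := boolP ((y == v) || (y == w)); first exact: (hit_u y).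
  have ux : e u x by apply: (triangle_adj t_tri) => //; rewrite eq_sym.
  have uy : e u y by apply: (triangle_adj t_tri) => //; rewrite eq_sym.
  exists [set x; y]; split; first exact: tri_edge2.
  by apply: induced_edge_cover; rewrite ?nbhd_u //; apply: (triangle_adj t_tri).
have [x [y [x_t y_t xy xv yv]]] := triangle_opposite t_tri v_t.
have xu : x != u by apply: contraNneq u_t => <-.
have yu : y != u by apply: contraNneq u_t => <-.
have vx : e v x by apply: (triangle_adj t_tri) => //; rewrite eq_sym.
have vy : e v y by apply: (triangle_adj t_tri) => //; rewrite eq_sym.
exists [set x; y]; split; first exact: tri_edge2.
by apply: induced_edge_cover; rewrite ?nbhd_v //; apply: (triangle_adj t_tri).
Qed.

Lemma pair_reducible (S : {set {set T}}) :
  {in S, forall t, is_triangle e t} ->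
  {in S &, forall t1 t2 : {set T}, t1 != t2 -> #|t1 :&: t2| <= 1} ->
  {in S, forall t : {set T}, t \subset u |: (v |: A)} ->
  2 + #|induced_edges A| <= 2 * #|S| ->
  reducible e [set u; v].
Proof.
move=> S_tri S_share S_sub S_card.
split; first by apply/set0Pn; exists u; rewrite !inE eqxx.
exists S, pair_cover; do !split => //.
- exact: pair_cover_edge.
- exact: leq_trans card_pair_cover S_card.
- move=> t t_tri; rewrite -setI_eq0 => /set0Pn[z]; rewrite !inE => /andP[z_t zuv].
  by apply: pair_cover_triangle => //; case/orP: zuv => /eqP<-; rewrite z_t ?orbT.
move=> t f tS [f_t /eqP/cards2P[a [b [ab f_ab]]]] f_uv; subst f.
have [a_t b_t] : a \in t /\ b \in t.
  by split; apply: (subsetP f_t); rewrite !inE eqxx ?orbT.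
have inA x : x \in t -> x \in [set a; b] -> x \in A.
  move=> x_t x_ab; have := subsetP (S_sub t tS) x x_t; rewrite !inE.
  by have := disjointFr f_uv x_ab; rewrite !inE => /norP[/negbTE-> /negbTE->].
apply: induced_edge_cover; rewrite ?inA ?setU11 ?inE ?eqxx ?orbT //.
exact: triangle_adj (S_tri t tS) a_t b_t ab.
Qed.

End Triangles.

(* Triangles of a graph on [0 .. n-1] are lists of three vertices; two
   triangles of a packing share at most one vertex, i.e. no edge. *)
Definition triangleb (g : rel nat) (n : nat) (t : seq nat) : bool :=
  [&& size t == 3, uniq t, all (gtn n) t &
      allrel (fun i j => (i == j) || g i j) t t].

Definition packingb (g : rel nat) (n : nat) (P : seq (seq nat)) : bool :=
  [&& uniq P, all (triangleb g n) P &
      allrel (fun s t : seq nat => (s == t) || (count (mem s) t <= 1)) P P].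

Section LiftPacking.
Variables (T : finType) (e : rel T) (n : nat) (g : rel nat) (f : nat -> T).
Hypothesis f_inj : {in gtn n &, injective f}.
Hypothesis f_hom : {in gtn n &, forall i j, e (f i) (f j) = g i j}.

Definition lift (t : seq nat) : {set T} := [set x in map f t].

Lemma card_lift t : uniq t -> all (gtn n) t -> #|lift t| = size t.
Proof.
move=> t_uniq /allP t_n; rewrite cardsE (card_uniqP _) ?size_map //.
by rewrite map_inj_in_uniq // => i j /t_n i_n /t_n j_n; apply: f_inj.
Qed.

Lemma card_liftI s t :
  all (gtn n) s -> all (gtn n) t -> #|lift s :&: lift t| <= count (mem s) t.
Proof.
move=> /allP s_n /allP t_n.
apply: leq_trans (_ : #|lift (filter (mem s) t)| <= _); last first.
  by rewrite cardsE (leq_trans (card_size _)) // size_map size_filter.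
apply/subset_leq_card/subsetP => x; rewrite !inE => /andP[/mapP[i si ->]].
case/mapP=> j tj /(f_inj (s_n i si) (t_n j tj)) eij; subst j.
by apply: map_f; rewrite mem_filter; apply/andP.
Qed.

Lemma lift_triangle t : triangleb g n t -> is_triangle e (lift t).
Proof.
case/and4P=> /eqP t3 t_uniq t_n /allrelP t_adj; split; first by rewrite card_lift.
move=> x y; rewrite !inE => /mapP[i ti ->] /mapP[j tj ->] fij.
have /orP[/eqP eij | gij] := t_adj i j ti tj; first by rewrite eij eqxx in fij.
by rewrite f_hom //; apply: (allP t_n).
Qed.

Section Packing.
Variable P : seq (seq nat).
Hypothesis P_ok : packingb g n P.

Definition lift_packing : {set {set T}} := [set x in map lift P].

Let P_tri t : t \in P -> triangleb g n t.
Proof. by case/and3P: P_ok => _ /allP P_tri _; apply: P_tri. Qed.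

Let P_n t : t \in P -> all (gtn n) t.
Proof. by case/P_tri/and4P. Qed.

Let P_share s t : s \in P -> t \in P -> s != t -> #|lift s :&: lift t| <= 1.
Proof.
move=> sP tP st; case/and3P: P_ok => _ _ /allrelP/(_ s t sP tP).
by rewrite (negbTE st) => /(leq_trans (card_liftI (P_n sP) (P_n tP))).
Qed.

Lemma lift_packing_triangle : {in lift_packing, forall t, is_triangle e t}.
Proof. by move=> t; rewrite inE => /mapP[s /P_tri/lift_triangle sP ->]. Qed.

Lemma lift_packing_share :
  {in lift_packing &, forall t1 t2 : {set T}, t1 != t2 -> #|t1 :&: t2| <= 1}.
Proof.
move=> t1 t2; rewrite !inE => /mapP[s sP ->] /mapP[t tP ->] st.
by apply: P_share => //; apply: contraNneq st => ->.
Qed.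

Lemma card_lift_packing : #|lift_packing| = size P.
Proof.
have P_uniq : uniq P by case/and3P: P_ok.
rewrite cardsE (card_uniqP _) ?size_map // map_inj_in_uniq // => s t sP tP lst.
apply/eqP; apply: contraT => st; have := P_share sP tP st.
case/and4P: (P_tri tP) => /eqP t3 t_uniq t_n _.
by rewrite lst setIid card_lift ?t3.
Qed.

Lemma mem_lift_packing t x :
  t \in lift_packing -> x \in t -> exists2 i, i < n & x = f i.
Proof.
rewrite inE => /mapP[s sP ->]; rewrite inE => /mapP[i si ->].
by exists i => //; apply: (allP (P_n sP)).
Qed.

End Packing.
End LiftPacking.

Definition base_pairs : seq (nat * nat) :=
  [seq p <- [seq (a, b) | a <- iota 2 5, b <- iota 2 5] | p.1 < p.2].

Lemma mem_base_pairs a b : 2 <= a -> a < b -> b < 7 -> (a, b) \in base_pairs.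
Proof.
move=> a2 ab b7; rewrite mem_filter; apply/andP; split; first exact: ab.
apply: (allpairs_f pair); rewrite mem_iota.
- by rewrite a2 (ltn_trans ab b7).
- by rewrite (leq_trans a2 (ltnW ab)) b7.
Qed.

(* The join of the edge 01 with the graph on 2 .. 6 whose edge set is read
   off the bit vector [bs], one bit per pair of [base_pairs]. *)
Definition join_rel (bs : seq bool) : rel nat := fun i j =>
  (i != j) && [|| i < 2, j < 2 | nth false bs (index (minn i j, maxn i j) base_pairs)].

Definition triangles (g : rel nat) (n : nat) : seq (seq nat) :=
  [seq t <- flatten [seq [seq [:: a; b; c] | b <- iota a.+1 (n - a.+1),
                                              c <- iota b.+1 (n - b.+1)]
                    | a <- iota 0 n]
     | triangleb g n t].

Fixpoint find_packing (k : nat) (cands acc : seq (seq nat)) {struct cands}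
    : option (seq (seq nat)) :=
  if k is k'.+1 then
    if cands is t :: cands' then
      if all (fun s : seq nat => count (mem s) t <= 1) acc then
        if find_packing k' cands' (t :: acc) is Some P then Some P
        else find_packing k cands' acc
      else find_packing k cands' acc
    else None
  else Some acc.

Definition join_packing (bs : seq bool) : seq (seq nat) :=
  odflt [::] (find_packing (uphalf (count id bs)).+1 (triangles (join_rel bs) 7) [::]).

Fixpoint bitvecs (n : nat) : seq (seq bool) :=
  if n is n'.+1 then [seq b :: bs | b <- [:: false; true], bs <- bitvecs n']
  else [:: [::]].

Lemma mem_bitvecs bs : bs \in bitvecs (size bs).
Proof.
by elim: bs => // b bs IH; apply: (allpairs_f (fun b bs => b :: bs)) => //; case: b.
Qed.

(* The search is not trusted: its output is validated by [packingb]. *)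
Lemma join_packing_ok :
  all (fun bs => packingb (join_rel bs) 7 (join_packing bs) &&
                 (2 + count id bs <= 2 * size (join_packing bs))) (bitvecs 10).
Proof. by vm_compute. Qed.

Lemma join_packing_exists bs : size bs = 10 ->
  exists2 P, packingb (join_rel bs) 7 P & 2 + count id bs <= 2 * size P.
Proof.
move=> bs10; have /allP/(_ bs) := join_packing_ok; rewrite -bs10 mem_bitvecs.
by case/(_ isT)/andP; exists (join_packing bs).
Qed.

Section Labelling.
Variables (T : finType) (e : rel T) (u v : T) (A : {set T}).
Hypotheses (e_sym : symmetric e) (e_irr : irreflexive e) (huv : e u v).
Hypotheses (A_u : forall x, x \in A -> e u x) (A_v : forall x, x \in A -> e v x).
Hypothesis A5 : #|A| = 5.

Definition label (i : nat) : T := nth u [:: u, v & enum A] i.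

Lemma label_inj : {in gtn 7 &, injective label}.
Proof.
have uA : u \notin A by apply/negP => /A_u; rewrite e_irr.
have vA : v \notin A by apply/negP => /A_v; rewrite e_irr.
have uv : u != v by apply: contraTneq huv => ->; rewrite e_irr.
have labels_uniq : uniq [:: u, v & enum A].
  by rewrite /= !inE !mem_enum negb_or uv uA vA enum_uniq.
have size_labels : size [:: u, v & enum A] = 7 by rewrite /= -cardE A5.
by move=> i j i7 j7 /eqP; rewrite /label nth_uniq ?size_labels // => /eqP.
Qed.

Lemma label_in_A i : 2 <= i < 7 -> label i \in A.
Proof.
case: i => [|[|i]] //= i7; rewrite /label /= -mem_enum mem_nth //.
by rewrite -cardE A5.
Qed.

Lemma label_in_uvA i : i < 7 -> label i \in u |: (v |: A).
Proof.
case: i => [|[|i]] i7; rewrite !inE; [exact/or3P/Or31 | exact/or3P/Or32 |].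
by rewrite label_in_A ?orbT.
Qed.

Lemma label_onto x : x \in A -> exists2 i, 2 <= i < 7 & label i = x.
Proof.
move=> xA; exists (index x (enum A)).+2; last by rewrite /label /= nth_index ?mem_enum.
by have := index_mem x (enum A); rewrite mem_enum xA -cardE A5 => ix5; exact: ix5.
Qed.

Definition join_bits : seq bool := [seq e (label p.1) (label p.2) | p <- base_pairs].

Lemma size_join_bits : size join_bits = 10.
Proof. by rewrite size_map. Qed.

Lemma label_join :
  {in gtn 7 &, forall i j, e (label i) (label j) = join_rel join_bits i j}.
Proof.
move=> i j; rewrite !inE => i7 j7; rewrite /join_rel.
have [-> | ij] := eqVneq i j; first by rewrite e_irr.
have apex k l : k < 2 -> l < 7 -> k != l -> e (label k) (label l).
  case: k => [|[|]] // _; case: l => [|[|l]] // l7 _;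
  by [rewrite e_sym | apply: A_u; apply: label_in_A | apply: A_v; apply: label_in_A].
have [i2 | i2] := ltnP i 2; first exact: apex.
have [j2 | j2] := ltnP j 2; first by rewrite e_sym apex // eq_sym.
wlog ij_lt : i j i7 j7 ij i2 j2 / i < j.
  move=> wlog_ij; move: (ij); rewrite neq_ltn => /orP[ij_lt | ji_lt].
    exact: wlog_ij.
  by rewrite e_sym minnC maxnC wlog_ij // eq_sym.
have ij_base : (i, j) \in base_pairs by apply: mem_base_pairs.
rewrite (minn_idPl (ltnW ij_lt)) (maxn_idPr (ltnW ij_lt)).
by rewrite (nth_map (0, 0)) ?index_mem ?nth_index.
Qed.

Lemma card_induced_edges_join : #|induced_edges e A| <= count id join_bits.
Proof.
pose edge_of (p : nat * nat) := [set label p.1; label p.2].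
rewrite /join_bits count_map -size_filter -(size_map edge_of).
apply: leq_trans (card_size _); apply/subset_leq_card/subsetP => E.
case/imset2P=> a b aA; rewrite inE => /andP[bA ab] ->{E}.
have [i i_lt ia] := label_onto aA; have [j j_lt jb] := label_onto bA.
subst a b; clear aA bA; case/andP: i_lt => i2 i7; case/andP: j_lt => j2 j7.
wlog ij : i j i2 i7 j2 j7 ab / i < j.
  move=> wlog_ij; case: (ltngtP i j) => [ij | ji | eij]; first exact: wlog_ij.
    by rewrite setUC; apply: wlog_ij; rewrite // e_sym.
  by move: ab; rewrite eij e_irr.
by apply/mapP; exists (i, j); rewrite // mem_filter mem_base_pairs // andbT.
Qed.

End Labelling.

Lemma join_reducible (T : finType) (e : rel T) (u v w : T) (A : {set T}) :
  symmetric e -> irreflexive e -> e u v -> e u w ->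
  {in A, forall x, e u x && e v x} -> #|A| = 5 ->
  (forall x, e u x -> x != v -> x != w -> x \in A) ->
  (forall x, e v x -> x != u -> x \in A) ->
  reducible e [set u; v].
Proof.
move=> e_sym e_irr huv huw A_uv A5 nbhd_u nbhd_v.
have A_u x : x \in A -> e u x by case/A_uv/andP.
have A_v x : x \in A -> e v x by case/A_uv/andP.
have f_inj := label_inj e_irr huv A_u A_v A5.
have f_hom := label_join e_sym e_irr huv A_u A_v A5.
have [P P_ok P_card] := join_packing_exists (size_join_bits e u v A).
apply: (pair_reducible huv huw nbhd_u nbhd_v (S := lift_packing (label u v A) P)).
- exact: (lift_packing_triangle f_inj f_hom P_ok).
- exact: (lift_packing_share f_inj P_ok).
- move=> t tS; apply/subsetP => x x_t.
  by have [i i7 ->] := mem_lift_packing P_ok tS x_t; apply: label_in_uvA.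
- rewrite (card_lift_packing f_inj P_ok); apply: leq_trans P_card.
  by rewrite leq_add2l card_induced_edges_join.
Qed.

Theorem lemma7p6 (T : finType) (e : rel T)
  (e_sym : symmetric e) (e_irr : irreflexive e)
  (rob : robust e) (u v : T) (huv : e u v)
  (du : deg e u = 7) (dv : deg e v = 6) :
  ~ reducible e [set v] -> subsumes e u v -> reducible e [set u; v].
Proof.
move=> _ u_subsumes_v.
have vu : e v u by rewrite e_sym.
have duv : deg e u = (deg e v).+1 by rewrite du dv.
have [w uw nbhd_u] := subsumer_extra_nbhd e_sym e_irr huv u_subsumes_v duv.
apply: (join_reducible e_sym e_irr huv uw _ _ nbhd_u).
- by move=> x /(subsumed_adj u_subsumes_v) [-> ->].
- by rewrite card_nbhdD1 ?dv.
- by move=> x vx xu; rewrite !inE xu.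
Qed.
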